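(* Let $q\ge 1$ and $s\ge 0$ be integers and assume that the polynomials $L_0,\dots,L_q$ defined in the context are linearly independent. For $k=0,\dots,q$ and $m=0,\dots,2^s-1$ define $$e_{k,m}(z) = \frac{1}{\sqrt{(2k+1)2^s}}\, r_q^m(z2^{-s})\, D_q^{-1}(z2^{-s})\, L_k(z2^{-s}), \qquad \tilde e_{k,m}(z) = D_q^{2^s}(z2^{-s})\, e_{k,m}(z),$$ and $\Pi^m = \{\tilde e_{0,m},\tilde e_{1,m},\dots,\tilde e_{q,m}\}$. Then for each $m = 0,1,\dots,2^s-1$, the functions in $\Pi^m$ are linearly independent.
   Context: $N_q(z) = \sum_{j=0}^q \frac{(2q-j)!\,q!}{(2q)!\,j!\,(q-j)!} z^j$, $D_q(z) = N_q(-z)$, $r_q = N_q/D_q$ (diagonal Padé approximant of $e^z$). For scalar $z$ (not a zero of $D_q$), let $C_0(z),\dots,C_q(z)$ be the solution of the linear system, with $\tilde C_k = C_k/(2k+1)$, $\tilde C_{q+1}=0$: $\sum_{k=0}^q(-1)^k(2k+1)\tilde C_k = 1$ and, for $j=1,\dots,q$, $-z\tilde C_{j-1} + (4j+2)\tilde C_j + z\tilde C_{j+1} = 0$. These are rational functions of the form $C_k(z) = L_k(z)/D_q(z)$ with $L_k$ polynomials of degree at most $q$, and $\sum_k C_k(z) = r_q(z)$. (These are the coefficients of the Legendre–Petrov–Galerkin expansion $\sum_k C_k P_k(t)\approx e^{zt}$ on $[0,1]$.) *)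

(* Scalars live in an arbitrary numClosedFieldType C
   (e.g. algC, or complex numbers R[i]); the paper's setting is C = complex. *)
From HB Require Import structures.
From mathcomp Require Import all_boot all_order all_algebra.
Set Implicit Arguments. Unset Strict Implicit. Unset Printing Implicit Defensive.
Import Order.TTheory GRing.Theory Num.Theory.
Local Open Scope ring_scope.

Section Pade.
Variable C : numClosedFieldType.

Definition pade_coef (q j : nat) : C :=
  (((2 * q - j)`! * q`!)%:R) / (((2 * q)`! * j`! * (q - j)`!)%:R).

Definition Nq (q : nat) : {poly C} := \poly_(j < q.+1) pade_coef q j.

Definition Dq_at (q : nat) (z : C) : C := (Nq q).[- z].

Definition rq_at (q : nat) (z : C) : C := (Nq q).[z] / Dq_at q z.

Definition Ctilde (q : nat) (L : nat -> {poly C}) (z : C) (k : nat) : C :=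
  if (k <= q)%N then ((L k).[z] / Dq_at q z) / (2 * k + 1)%:R else 0.

(* (C_0,...,C_q) = (L_0/D_q, ..., L_q/D_q) solves the linear system of the context
   at the point z *)
Definition solves_system (q : nat) (L : nat -> {poly C}) (z : C) : Prop :=
  (\sum_(k < q.+1) (-1) ^+ k * (2 * k + 1)%:R * Ctilde q L z k = 1) /\
  (forall j : nat, (1 <= j <= q)%N ->
     - z * Ctilde q L z j.-1 + (4 * j + 2)%:R * Ctilde q L z j
       + z * Ctilde q L z j.+1 = 0).

Definition polys_lin_indep (q : nat) (L : nat -> {poly C}) : Prop :=
  forall a : nat -> C, \sum_(k < q.+1) a k *: L k = 0 ->
    forall k : nat, (k <= q)%N -> a k = 0.

Definition e_km (q s : nat) (L : nat -> {poly C}) (k m : nat) (z : C) : C :=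
  let w := z / (2 ^+ s) in
  (sqrtC (((2 * k + 1) * 2 ^ s)%N%:R))^-1 * rq_at q w ^+ m
    * (Dq_at q w)^-1 * (L k).[w].

Definition et_km (q s : nat) (L : nat -> {poly C}) (k m : nat) (z : C) : C :=
  Dq_at q (z / (2 ^+ s)) ^+ (2 ^ s) * e_km q s L k m z.

(* linear independence of the functions Pi^m = {e~_{0,m},...,e~_{q,m}}, as functions
   on their natural domain {z | D_q(z 2^-s) <> 0} *)
Definition Pi_lin_indep (q s : nat) (L : nat -> {poly C}) (m : nat) : Prop :=
  forall a : nat -> C,
    (forall z : C, Dq_at q (z / (2 ^+ s)) != 0 ->
       \sum_(k < q.+1) a k * et_km q s L k m z = 0) ->
    forall k : nat, (k <= q)%N -> a k = 0.

End Pade.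

(* With w = z 2^-s, the factor D_q^(2^s)(w) clears the denominators of
   r_q^m(w) D_q^-1(w), so e~_{k,m}(z) = c_k N_q^m(w) D_q^(2^s-m-1)(w) L_k(w)
   for a nonzero constant c_k.  A vanishing combination sum_k a_k e~_{k,m}
   therefore makes the polynomial sum_k a_k c_k L_k vanish wherever N_q D_q does
   not, hence identically (N_q D_q is a nonzero polynomial), and the
   independence of the L_k forces every a_k to vanish. *)
From HB Require Import structures.
From mathcomp Require Import all_boot all_order all_algebra.
From mathcomp Require Import ring.
Import Order.TTheory GRing.Theory Num.Theory.
Local Open Scope ring_scope.

Lemma poly_eq0_off_root (R : numDomainType) (p d : {poly R}) : d != 0 ->
  (forall x, d.[x] != 0 -> p.[x] = 0) -> p = 0.
Proof.
move=> d_neq0 p_off_d.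
have pd0 : p * d = 0.
  apply: (@roots_geq_poly_eq0 _ _ [seq i%:R | i <- iota 0 (size (p * d))]).
  - apply/allP => _ /mapP [i _ ->]; rewrite rootE hornerM.
    by have [->|/p_off_d ->] := eqVneq d.[i%:R] 0; rewrite ?mulr0 ?mul0r.
  - by rewrite map_inj_uniq ?iota_uniq //; apply: mulrIn; rewrite oner_neq0.
  - by rewrite size_map size_iota.
by move/eqP: pd0; rewrite mulf_eq0 (negbTE d_neq0) orbF => /eqP.
Qed.

Lemma clear_denoms_exp (F : fieldType) (n d : F) (e m : nat) :
  d != 0 -> (m < e)%N -> d ^+ e * ((n / d) ^+ m / d) = n ^+ m * d ^+ (e - m.+1).
Proof.
move=> d_neq0 lt_me; rewrite -{1}(subnK lt_me) addnS exprS exprD.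
rewrite expr_div_n; field.
by rewrite d_neq0 expf_neq0.
Qed.

Section PadeProducts.
Variables (C : numClosedFieldType) (q s : nat) (L : nat -> {poly C}).

Definition Dq : {poly C} := Nq C q \Po - 'X.

Lemma Dq_atE z : Dq_at q z = Dq.[z].
Proof. by rewrite /Dq_at /Dq horner_comp hornerN hornerX. Qed.

Lemma Nq_at0 : (Nq C q).[0] = 1.
Proof.
rewrite horner_coef0 coef_poly /pade_coef !subn0 fact0 muln1 divff //.
by rewrite pnatr_eq0 muln_eq0 negb_or -!lt0n !fact_gt0.
Qed.

Lemma Nq_neq0 : Nq C q != 0.
Proof. by apply: contra_eq_neq Nq_at0 => ->; rewrite horner0 eq_sym oner_neq0. Qed.

Lemma Dq_neq0 : Dq != 0.
Proof.
have D_at0 : Dq.[0] = 1 by rewrite -Dq_atE /Dq_at oppr0 Nq_at0.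
by apply: contra_eq_neq D_at0 => ->; rewrite horner0 eq_sym oner_neq0.
Qed.

Definition e_scale (k : nat) : C := (sqrtC (((2 * k + 1) * 2 ^ s)%N%:R))^-1.

Lemma e_scale_neq0 k : e_scale k != 0.
Proof.
by rewrite invr_eq0 sqrtC_eq0 pnatr_eq0 muln_eq0 negb_or addn1 expn_eq0.
Qed.

Lemma et_km_scaled k m w : Dq_at q w != 0 -> (m < 2 ^ s)%N ->
  et_km q s L k m (w * 2 ^+ s) =
  e_scale k * ((Nq C q).[w] ^+ m * Dq_at q w ^+ (2 ^ s - m.+1) * (L k).[w]).
Proof.
move=> D_neq0 lt_m.
have two_s_neq0 : (2 ^+ s : C) != 0 by rewrite expf_neq0 // pnatr_eq0.
rewrite /et_km /e_km mulfK // -/(e_scale k) /rq_at.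
rewrite -(@clear_denoms_exp _ (Nq C q).[w] _ _ _ D_neq0 lt_m); ring.
Qed.

Lemma sum_et_km (a : nat -> C) m w : Dq_at q w != 0 -> (m < 2 ^ s)%N ->
  \sum_(k < q.+1) a k * et_km q s L k m (w * 2 ^+ s) =
  (Nq C q).[w] ^+ m * Dq_at q w ^+ (2 ^ s - m.+1) *
  (\sum_(k < q.+1) (a k * e_scale k) *: L k).[w].
Proof.
move=> D_neq0 lt_m; rewrite horner_sum mulr_sumr; apply: eq_bigr => k _.
by rewrite et_km_scaled // hornerZ; ring.
Qed.

End PadeProducts.

Theorem lemma3 (C : numClosedFieldType) (q s : nat) (L : nat -> {poly C}) :
  (1 <= q)%N ->
  (forall z : C, Dq_at q z != 0 -> solves_system q L z) ->
  polys_lin_indep q L ->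
  forall m : nat, (m < 2 ^ s)%N -> Pi_lin_indep q s L m.
Proof.
move=> _ _ L_indep m lt_m a Pi_comb0 k le_kq.
set S := \sum_(k < q.+1) (a k * e_scale C s k) *: L k.
have S0 : S = 0.
  apply: (@poly_eq0_off_root _ _ _ (mulf_neq0 (Dq_neq0 C q) (Nq_neq0 C q))) => w.
  rewrite hornerM mulf_eq0 negb_or -Dq_atE => /andP [D_neq0 N_neq0].
  have := Pi_comb0 (w * 2 ^+ s).
  rewrite mulfK ?expf_neq0 ?pnatr_eq0 // sum_et_km // => /(_ D_neq0) /eqP.
  by rewrite !mulf_eq0 !expf_eq0 (negbTE N_neq0) (negbTE D_neq0) !andbF => /eqP.
have /eqP := L_indep (fun k => a k * e_scale C s k) S0 k le_kq.
by rewrite mulf_eq0 (negbTE (e_scale_neq0 C s k)) orbF => /eqP.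
Qed.
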